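(* Assume $d(\eta,\cdot)$ attains its minimum over $\mathcal G$ at $g^*=g^{(\theta^* )}$ for some $\theta^*\in\mathbb{R}^m$, and let $g^{bf}$ be the maximum-entropy element of $P$. Then $$d(\eta,g^{bf})-d(\eta,g^* )\le 2\,\epsilon\cdot|\theta^*|\le 2\|\epsilon\|_\infty\|\theta^*\|_1 .$$ If moreover $g^{bf}\in\mathcal G$, the left-hand side equals $d(g^*,g^{bf})$, so $d(g^*,g^{bf})\le 2\epsilon\cdot|\theta^*|=O(\|\epsilon\|_\infty)$.
   Context: Standard setup. Let $n\ge1$, $k\ge2$, $p\ge1$ be integers and $m=p+k$. There are $n$ data points $x_1,\dots,x_n$ and $p$ rules $h^{(1)},\dots,h^{(p)}$, each a map from $\{x_1,\dots,x_n\}$ to $\{1,\dots,k\}\cup\{?\}$, where ''?'' means abstain. Let $n_j\ge1$ be the number of indices $i$ with $h^{(j)}(x_i)\neq ?$. $\Delta_k$ denotes the probability simplex in $\mathbb{R}^k$; an element $z\in\Delta_k^n\subset\mathbb{R}^{nk}$ is written $z=(z_1,\dots,z_n)$ with $z_i=(z_{i1},\dots,z_{ik})\in\Delta_k$. For $j\le p$ let $h^{(j)}\in\{0,1\}^{nk}$ also denote the vector with $h^{(j)}_{i\ell}=1$ iff $h^{(j)}(x_i)=\ell$; for $\ell\le k$ let $\vec e^{\,n}_\ell\in\{0,1\}^{nk}$ have entries $(\vec e^{\,n}_\ell)_{i\ell'}=\mathbf 1(\ell'=\ell)$. The matrix $A\in\mathbb{R}^{m\times nk}$ has rows $a^{(j)}=h^{(j)}/n_j$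 for $1\le j\le p$ and $a^{(p+\ell)}=\vec e^{\,n}_\ell/n$ for $1\le\ell\le k$. For $\theta\in\mathbb{R}^m$ put $a^{(\theta)}=A^\top\theta\in\mathbb{R}^{nk}$ (entries $a^{(\theta)}_{i\ell}$) and define $g^{(\theta)}\in\Delta_k^n$ by $g^{(\theta)}_{i\ell}=\exp(a^{(\theta)}_{i\ell})/\sum_{\ell'=1}^k\exp(a^{(\theta)}_{i\ell'})$; let $\mathcal G=\{g^{(\theta)}:\theta\in\mathbb{R}^m\}$. A fixed ''true labeling'' $\eta\in\Delta_k^n$ is given and $b^*:=A\eta\in\mathbb{R}^m$. Given $b\in\mathbb{R}^m$ and $\epsilon\in\mathbb{R}^m$ with $\epsilon\ge0$ and $b-\epsilon\le b^*\le b+\epsilon$ (entrywise), let $P=\{z\in\Delta_k^n:\ b-\epsilon\le Az\le b+\epsilon\}$ (entrywise). The maximum-entropy element of $P$ is the unique minimizer of $\sum_{i,\ell}z_{i\ell}\log z_{i\ell}$ over $P$ (with $0\log0=0$). For $\mu,\nu\in\Delta_k^n$, $d(\mu,\nu)=\sum_{i=1}^n\mathrm{KL}(\mu_i\|\nu_i)=\sum_{i,\ell}\mu_{i\ell}\log(\mu_{i\ell}/\nu_{i\ell})$, with $0\log(0/x)=0$. $|\theta|$ is the entrywise absolute value. *)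

From HB Require Import structures.
From mathcomp Require Import all_boot all_order all_algebra.
From mathcomp Require Import reals.
From mathcomp.analysis Require Import sequences exp.
Set Implicit Arguments. Unset Strict Implicit. Unset Printing Implicit Defensive.
Import Order.TTheory GRing.Theory Num.Theory.
Local Open Scope ring_scope.

Section Defs.
Variable R : realType.
Variables n k p : nat.

(* An element of R^{nk}, indexed by data point i and class l. *)
Definition vec := 'I_n -> 'I_k -> R.

Definition in_simplex (z : vec) : Prop :=
  (forall i l, 0 <= z i l) /\ (forall i, \sum_(l < k) z i l = 1).

(* rules: h j i = Some l  (label l)  or None  (abstain "?") *)
Variable h : 'I_p -> 'I_n -> option 'I_k.

Definition nrule (j : 'I_p) : nat := #|[set i : 'I_n | h j i != None]|.

(* entry (i,l) of row r of A, with rows indexed by 'I_(p + k) (m = p + k) *)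
Definition Aent (r : 'I_(p + k)) (i : 'I_n) (l : 'I_k) : R :=
  match split r with
  | inl j => if h j i == Some l then (nrule j)%:R^-1 else 0
  | inr l' => if l == l' then (n%:R)^-1 else 0
  end.

Definition Amul (z : vec) (r : 'I_(p + k)) : R :=
  \sum_(i < n) \sum_(l < k) Aent r i l * z i l.

Definition atheta (theta : 'I_(p + k) -> R) (i : 'I_n) (l : 'I_k) : R :=
  \sum_(r < p + k) theta r * Aent r i l.

Definition gtheta (theta : 'I_(p + k) -> R) (i : 'I_n) (l : 'I_k) : R :=
  expR (atheta theta i l) / \sum_(l' < k) expR (atheta theta i l').

Definition inP (b eps : 'I_(p + k) -> R) (z : vec) : Prop :=
  in_simplex z /\ (forall r, b r - eps r <= Amul z r <= b r + eps r).

Definition negent (z : vec) : R :=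
  \sum_(i < n) \sum_(l < k) (if z i l == 0 then 0 else z i l * ln (z i l)).

(* maximum-entropy element of P: an element of P minimizing negent over P
   (it is unique by strict convexity) *)
Definition is_maxent (b eps : 'I_(p + k) -> R) (z : vec) : Prop :=
  inP b eps z /\ (forall y, inP b eps y -> negent z <= negent y).

Definition dKL (mu nu : vec) : R :=
  \sum_(i < n) \sum_(l < k)
     (if mu i l == 0 then 0 else mu i l * ln (mu i l / nu i l)).

End Defs.

From HB Require Import structures.
From mathcomp Require Import all_boot all_order all_algebra.
From mathcomp Require Import reals boolp.
From mathcomp.analysis Require Import sequences exp.
From mathcomp Require Import ring lra.
Set Implicit Arguments. Unset Strict Implicit. Unset Printing Implicit Defensive.
Import Order.TTheory GRing.Theory Num.Theory.
Local Open Scope ring_scope.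

(* Write G = g^(thetastar).  Since ln G_il = a_il - ln Z_i with a = A^T thetastar, every
   z in the product of simplices satisfies  sum z ln G = thetastar.Az - sum_i ln Z_i,  so
   d(z, G) is, up to the entropy of z, affine in Az.  Two first-order conditions then do
   the work.  The maximum-entropy point g satisfies  sum (eta - g) ln g >= 0  and
   eta << g,  because eta lies in the convex set P; combined with Gibbs' inequality
   sum g ln G <= sum g ln g  this gives  d(eta, g) - d(eta, G) <= thetastar.(A eta - A g),
   and both A eta and A g lie in the box b +- eps.  Optimality of thetastar gives moment
   matching  A eta = A G,  after which the affine identity turns d(eta, g^(theta)) -
   d(eta, G) into d(G, g^(theta)).  Both first-order conditions are derived without
   derivatives: one compares values along a segment (resp. along thetastar + s v) and
   lets the step go to 0, using explicit bounds on ln and exp. *)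

Section real_inequalities.
Variable R : realType.
Implicit Types a c g e x y t C M : R.

Lemma ln_le_subr1 x : 0 < x -> ln x <= x - 1.
Proof. by move=> x0; have := @le_ln1Dx R (x - 1); rewrite addrCA subrr addr0; apply; lra. Qed.

Lemma mulr_lnB_le x y : 0 < x -> 0 < y -> x * (ln y - ln x) <= y - x.
Proof.
move=> x0 y0; rewrite -ln_div ?posrE //.
have := ler_wpM2l (ltW x0) (ln_le_subr1 (divr_gt0 y0 x0)).
by rewrite mulrBr mulrCA mulfV ?gt_eqF // !mulr1.
Qed.

Lemma xlnx_tangent x y : 0 < x -> 0 <= y ->
  x * ln x + (ln x + 1) * (y - x) <= y * ln y.
Proof.
move=> x0; rewrite le_eqVlt => /predU1P[<-|y0]; first by rewrite mul0r; nra.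
by have := mulr_lnB_le y0 x0; nra.
Qed.

Lemma expR_le_quad x : `|x| <= 1/2 -> expR x <= 1 + x + 2 * x ^+ 2.
Proof.
rewrite ler_norml => /andP[x_ge x_le].
have ex0 := expR_gt0 x.
have : expR x * (1 - x) <= 1.
  by have := ler_wpM2l (ltW ex0) (expR_ge1Dx (- x)); rewrite expRN mulfV ?gt_eqF.
have : 1 <= (1 + x + 2 * x ^+ 2) * (1 - x).
  have -> : (1 + x + 2 * x ^+ 2) * (1 - x) = 1 + x ^+ 2 * (1 - 2 * x) by ring.
  by rewrite lerDl; apply: mulr_ge0; [exact: sqr_ge0 | lra].
nra.
Qed.

Lemma ln_segment_le g e t : 0 < g -> 0 <= e -> 0 < t -> t <= 1/2 ->
  (e - g) * ln ((1 - t) * g + t * e) <= (e - g) * ln g + t * (2 * (e - g) ^+ 2 / g).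
Proof.
move=> g0 e0 t0 t1; set z := (1 - t) * g + t * e.
have zg : g / 2 <= z by rewrite /z; nra.
have z0 : 0 < z by lra.
have zgB : z - g = t * (e - g) by rewrite /z; ring.
have up := mulr_lnB_le g0 z0.
have lo : z - g <= z * (ln z - ln g).
  by have := mulr_lnB_le z0 g0; rewrite !mulrBr; lra.
rewrite zgB in up lo; set X := ln z - ln g in up lo *.
have : (e - g) * X <= t * (2 * (e - g) ^+ 2 / g).
  rewrite mulrA ler_pdivlMr //.
  have tsq : 0 <= t * (e - g) ^+ 2 by apply: mulr_ge0; [lra | exact: sqr_ge0].
  rewrite expr2 in tsq *.
  case: (lerP 0 (e - g)) => d0; first by nra.
  case: (lerP X 0) => X0; last by nra.
  nra.
rewrite /X; lra.
Qed.

Lemma le0_of_le_small x C c :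
  0 < c -> (forall t, 0 < t -> t <= c -> x <= t * C) -> x <= 0.
Proof.
move=> c0 small; rewrite leNgt; apply/negP => x0.
have C1 : 0 < `|C| + 1 by have := normr_ge0 C; lra.
pose t := Num.min c (x / (`|C| + 1)).
have t0 : 0 < t by rewrite lt_min c0 divr_gt0.
have tx : t * (`|C| + 1) <= x by rewrite -ler_pdivlMr // ge_min lexx orbT.
have tc : t <= c by rewrite ge_min lexx.
have := small t t0 tc; have := ler_norm C; nra.
Qed.

Lemma mul_ln_small_le a M : 0 < a ->
  exists t, [/\ 0 < t, t <= 1/2 & a * ln (t * a) <= M].
Proof.
move=> a0; pose t := Num.min (1/2) (expR (M / a) / a).
have t0 : 0 < t.
  by rewrite lt_min; apply/andP; split; [lra | exact: divr_gt0 (expR_gt0 _) a0].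
exists t; split => //; first by rewrite ge_min lexx.
have ta : t * a <= expR (M / a) by rewrite -ler_pdivlMr // ge_min lexx orbT.
have : ln (t * a) <= M / a by rewrite -ler_expR lnK ?posrE ?mulr_gt0.
by rewrite -(ler_pM2l a0) mulrCA mulfV ?gt_eqF // mulr1.
Qed.

Lemma sumr_ge_entry (I : finType) (F : I -> R) j :
  (forall i, 0 <= F i) -> F j <= \sum_i F i.
Proof. by move=> F0; rewrite (bigD1 j) //= lerDl sumr_ge0. Qed.

Lemma sumr_le_entry (I : finType) (F : I -> R) j :
  (forall i, F i <= 0) -> \sum_i F i <= F j.
Proof. by move=> F0; rewrite (bigD1 j) //= gerDl sumr_le0. Qed.

End real_inequalities.

Section simplex.
Variables (R : realType) (n k : nat).
Implicit Types z g e mu nu : vec R n k.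

Lemma if_eq0_mul (x y : R) : (if x == 0 then 0 else x * y) = x * y.
Proof. by case: eqP => // ->; rewrite mul0r. Qed.

Lemma negentE z : negent z = \sum_i \sum_l z i l * ln (z i l).
Proof. by apply: eq_bigr => i _; apply: eq_bigr => l _; rewrite if_eq0_mul. Qed.

Lemma dKL_sumB mu nu :
  (forall i l, 0 <= mu i l) -> (forall i l, 0 < mu i l -> 0 < nu i l) ->
  dKL mu nu = \sum_i \sum_l mu i l * ln (mu i l)
              - \sum_i \sum_l mu i l * ln (nu i l).
Proof.
move=> mu0 supp; rewrite -sumrB; apply: eq_bigr => i _.
rewrite -sumrB; apply: eq_bigr => l _; rewrite if_eq0_mul.
have [->|mu_neq0] := eqVneq (mu i l) 0; first by rewrite !mul0r subrr.
have mu_gt0 : 0 < mu i l by rewrite lt0r mu_neq0 mu0.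
by rewrite ln_div ?posrE ?supp // mulrBr.
Qed.

Lemma gibbs_ineq g (G : vec R n k) :
  in_simplex g -> (forall i l, 0 < G i l) -> (forall i, \sum_l G i l = 1) ->
  \sum_i \sum_l g i l * ln (G i l) <= \sum_i \sum_l g i l * ln (g i l).
Proof.
case=> g0 g1 G0 G1.
have sum0 : \sum_i \sum_l (G i l - g i l) = 0 :> R.
  by rewrite big1 // => i _; rewrite sumrB g1 G1 subrr.
suff : \sum_i \sum_l g i l * ln (G i l) - \sum_i \sum_l g i l * ln (g i l)
    <= \sum_i \sum_l (G i l - g i l) by rewrite sum0 subr_le0.
rewrite -sumrB; apply: ler_sum => i _.
rewrite -sumrB; apply: ler_sum => l _.
have [->|g_neq0] := eqVneq (g i l) 0; first by rewrite !mul0r subrr subr0 ltW.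
have g_gt0 : 0 < g i l by rewrite lt0r g_neq0 g0.
by rewrite -mulrBr; exact: mulr_lnB_le.
Qed.

Definition segment g e (t : R) : vec R n k := fun i l => (1 - t) * g i l + t * e i l.

Lemma in_simplex_segment g e t :
  in_simplex g -> in_simplex e -> 0 <= t <= 1 -> in_simplex (segment g e t).
Proof.
case=> g0 g1 [e0 e1] /andP[t0 t1]; split => [i l | i].
  by apply: addr_ge0; apply: mulr_ge0 => //; lra.
by rewrite big_split /= -!mulr_sumr g1 e1; ring.
Qed.

Section variational.
Variables g e : vec R n k.
Hypotheses (gS : in_simplex g) (eS : in_simplex e).

Lemma negent_segment_le t : 0 < t < 1 ->
  negent (segment g e t) - negent g
  <= t * \sum_i \sum_l (e i l - g i l) * ln (segment g e t i l).
Proof.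
move=> /andP[t0 t1]; have [[g0 g1] [e0 e1]] := (gS, eS).
have -> : t * \sum_i \sum_l (e i l - g i l) * ln (segment g e t i l)
    = \sum_i \sum_l (ln (segment g e t i l) + 1) * (segment g e t i l - g i l).
  rewrite mulr_sumr; apply: eq_bigr => i _.
  have -> : \sum_l (ln (segment g e t i l) + 1) * (segment g e t i l - g i l)
      = t * \sum_l (e i l - g i l) * ln (segment g e t i l)
        + t * \sum_l (e i l - g i l).
    by rewrite !mulr_sumr -big_split /=; apply: eq_bigr => l _; rewrite /segment; ring.
  have -> : \sum_l (e i l - g i l) = 0 by rewrite sumrB e1 g1 subrr.
  by rewrite mulr0 addr0.
rewrite !negentE -sumrB; apply: ler_sum => i _; rewrite -sumrB; apply: ler_sum => l _.
set z := segment g e t i l.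
have [z0|z_neq0] := eqVneq z 0.
  have -> : g i l = 0.
    by move: z0; rewrite /z /segment; have := g0 i l; have := e0 i l; nra.
  by rewrite z0; lra.
have z_gt0 : 0 < z.
  rewrite lt0r z_neq0; apply: addr_ge0; apply: mulr_ge0 => //; lra.
by have := xlnx_tangent z_gt0 (g0 i l); lra.
Qed.

Lemma sum_segment_ln_le : exists2 C, 0 <= C & forall t, 0 < t -> t <= 1/2 ->
  \sum_i \sum_l (e i l - g i l) * ln (segment g e t i l)
  <= \sum_i \sum_l (e i l - g i l) * ln (g i l) + t * C
     + \sum_i \sum_l (if g i l == 0 then e i l * ln (t * e i l) else 0).
Proof.
have [[g0 _] [e0 _]] := (gS, eS).
pose c i l := if g i l == 0 then 0 else 2 * (e i l - g i l) ^+ 2 / g i l.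
exists (\sum_i \sum_l c i l).
  apply: sumr_ge0 => i _; apply: sumr_ge0 => l _; rewrite /c; case: eqP => // _.
  by apply: divr_ge0 => //; apply: mulr_ge0 => //; exact: sqr_ge0.
move=> t t0 t1; rewrite mulr_sumr -!big_split /=; apply: ler_sum => i _.
rewrite mulr_sumr -!big_split /=; apply: ler_sum => l _.
rewrite /c /segment; case: eqP => [->|/eqP g_neq0].
  have -> : (1 - t) * 0 + t * e i l = t * e i l by ring.
  by rewrite (@ln0 R 0 (lexx 0)); nra. (* the library sets ln 0 = 0 *)
have g_gt0 : 0 < g i l by rewrite lt0r g_neq0 g0.
by rewrite addr0; exact: ln_segment_le.
Qed.

Lemma negent_min_segment :
  (forall t, 0 < t -> t <= 1/2 -> negent g <= negent (segment g e t)) ->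
  (forall i l, 0 < e i l -> 0 < g i l)
  /\ 0 <= \sum_i \sum_l (e i l - g i l) * ln (g i l).
Proof.
move=> gmin; have [[g0 _] [e0 e1]] := (gS, eS).
set K := \sum_i \sum_l _.
(* Where g vanishes the segment contributes e ln (t e), which tends to -oo as t -> 0
   unless e vanishes too: this is what forces supp e to lie in supp g. *)
pose E t i l := if g i l == 0 then e i l * ln (t * e i l) else 0.
have [C C0 seg_le] := sum_segment_ln_le.
have E_le0 t : 0 < t -> t <= 1/2 -> forall i l, E t i l <= 0.
  move=> t0 t1 i l; rewrite /E; case: eqP => // _.
  apply: mulr_ge0_le0 => //; apply: ln_le0.
  have : e i l <= 1 by rewrite -(e1 i); exact: sumr_ge_entry.
  by have := e0 i l; nra.
have lower t : 0 < t -> t <= 1/2 -> 0 <= K + t * C + \sum_i \sum_l E t i l.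
  move=> t0 t1; apply: le_trans (seg_le t t0 t1); rewrite -(pmulr_rge0 _ t0).
  have t01 : 0 < t < 1 by apply/andP; split; lra.
  by have := negent_segment_le t01; have := gmin t t0 t1; lra.
split; last first.
  rewrite -oppr_le0; apply: (@le0_of_le_small _ _ C (1/2)) => [|t t0 t1]; first lra.
  have := lower t t0 t1; have : \sum_i \sum_l E t i l <= 0.
    by apply: sumr_le0 => i _; apply: sumr_le0 => l _; exact: E_le0.
  lra.
move=> i0 l0 e_gt0; rewrite lt0r g0 andbT; apply/negP => /eqP g_eq0.
have [t [t0 t1 small]] := mul_ln_small_le (- (`|K| + C + 1)) e_gt0.
have : \sum_i \sum_l E t i l <= E t i0 l0.
  apply: le_trans (sumr_le_entry i0 _) (sumr_le_entry l0 _) => [i|l]; last exact: E_le0.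
  by apply: sumr_le0 => l _; exact: E_le0.
rewrite /E g_eq0 eqxx => E_le.
have := lower t t0 t1; have := ler_norm K; nra.
Qed.

End variational.
End simplex.

Section box.
Variables (R : realType) (I : finType).

Lemma sum_mul_box_le (c eps th x y : I -> R) :
  (forall r, c r - eps r <= x r <= c r + eps r) ->
  (forall r, c r - eps r <= y r <= c r + eps r) ->
  \sum_r th r * (x r - y r) <= 2 * \sum_r eps r * `|th r|.
Proof.
move=> xbox ybox; rewrite mulr_sumr; apply: ler_sum => r _.
have /andP[x1 x2] := xbox r; have /andP[y1 y2] := ybox r.
have xy : `|x r - y r| <= 2 * eps r by rewrite ler_norml; apply/andP; split; lra.
apply: le_trans (ler_norm _) _; rewrite normrM.
have -> : 2 * (eps r * `|th r|) = `|th r| * (2 * eps r) by ring.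
by apply: ler_wpM2l; rewrite ?normr_ge0.
Qed.

Lemma sum_mul_norm_le_bigmax (eps th : I -> R) :
  \sum_r eps r * `|th r| <= \big[Num.max/0]_r eps r * \sum_r `|th r|.
Proof.
rewrite mulr_sumr; apply: ler_sum => r _.
by apply: ler_wpM2r; [exact: normr_ge0 | exact: le_bigmax].
Qed.

End box.

Section exponential_family.
Variables (R : realType) (n k p : nat) (h : 'I_p -> 'I_n -> option 'I_k).
Implicit Types (theta v b eps : 'I_(p + k) -> R) (z g e eta : vec R n k) (t : R).

Definition partition theta (i : 'I_n) : R := \sum_l expR (atheta h theta i l).

Lemma partition_gt0 theta i : (0 < k)%N -> 0 < partition theta i.
Proof.
move=> k0; apply: lt_le_trans (expR_gt0 (atheta h theta i (Ordinal k0))) _.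
by apply: sumr_ge_entry => l; exact: expR_ge0.
Qed.

Lemma gtheta_gt0 theta i l : 0 < gtheta h theta i l.
Proof. by rewrite divr_gt0 ?expR_gt0 // partition_gt0 // (leq_ltn_trans _ (ltn_ord l)). Qed.

Lemma in_simplex_gtheta theta : (0 < k)%N -> in_simplex (gtheta h theta).
Proof.
move=> k0; split=> [i l | i]; first exact/ltW/gtheta_gt0.
by rewrite -mulr_suml mulfV // gt_eqF // partition_gt0.
Qed.

Lemma ln_gtheta theta i l :
  ln (gtheta h theta i l) = atheta h theta i l - ln (partition theta i).
Proof.
by rewrite ln_div ?expRK ?posrE ?expR_gt0 ?partition_gt0 // (leq_ltn_trans _ (ltn_ord l)).
Qed.

Lemma atheta_addZ theta v s i l :
  atheta h (fun r => theta r + s * v r) i l = atheta h theta i l + s * atheta h v i l.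
Proof. by rewrite /atheta mulr_sumr -big_split /=; apply: eq_bigr => r _; ring. Qed.

Lemma sum_mul_atheta z theta :
  \sum_i \sum_l z i l * atheta h theta i l = \sum_r theta r * Amul h z r.
Proof.
rewrite /atheta /Amul.
under eq_bigr => i _ do under eq_bigr => l _ do rewrite mulr_sumr.
under [RHS]eq_bigr => r _ do rewrite mulr_sumr.
under [RHS]eq_bigr => r _ do under eq_bigr => i _ do rewrite mulr_sumr.
under eq_bigr => i _ do rewrite exchange_big.
rewrite exchange_big /=; apply: eq_bigr => r _.
by apply: eq_bigr => i _; apply: eq_bigr => l _; ring.
Qed.

Lemma sum_mul_ln_gtheta z theta : (forall i, \sum_l z i l = 1) ->
  \sum_i \sum_l z i l * ln (gtheta h theta i l)
  = \sum_r theta r * Amul h z r - \sum_i ln (partition theta i).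
Proof.
move=> z1; rewrite -sum_mul_atheta -sumrB; apply: eq_bigr => i _.
under eq_bigr => l _ do rewrite ln_gtheta mulrBr.
by rewrite sumrB -mulr_suml z1 mul1r.
Qed.

Lemma dKL_gtheta z theta : in_simplex z ->
  dKL z (gtheta h theta) = \sum_i \sum_l z i l * ln (z i l)
     - (\sum_r theta r * Amul h z r - \sum_i ln (partition theta i)).
Proof.
case=> z0 z1; rewrite dKL_sumB ?sum_mul_ln_gtheta // => i l _; exact: gtheta_gt0.
Qed.

Lemma inP_segment b eps g e t : inP h b eps g -> inP h b eps e -> 0 <= t <= 1 ->
  inP h b eps (segment g e t).
Proof.
move=> [gS gA] [eS eA] t01; split; first exact: in_simplex_segment.
have /andP[t0 t1] := t01.
move=> r; have /andP[g1 g2] := gA r; have /andP[e1 e2] := eA r.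
have -> : Amul h (segment g e t) r = (1 - t) * Amul h g r + t * Amul h e r.
  rewrite /Amul !mulr_sumr -big_split /=; apply: eq_bigr => i _.
  by rewrite !mulr_sumr -big_split /=; apply: eq_bigr => l _; rewrite /segment; ring.
by apply/andP; split; nra.
Qed.

Lemma maxent_variational b eps g e : is_maxent h b eps g -> inP h b eps e ->
  (forall i l, 0 < e i l -> 0 < g i l)
  /\ 0 <= \sum_i \sum_l (e i l - g i l) * ln (g i l).
Proof.
move=> [gP gmin] eP; apply: negent_min_segment; [exact: gP.1 | exact: eP.1 |].
by move=> t t0 t1; apply/gmin/inP_segment => //; apply/andP; split; lra.
Qed.

Lemma dKL_sub_le_maxent b eps eta g theta : (0 < k)%N ->
  inP h b eps eta -> is_maxent h b eps g ->
  dKL eta g - dKL eta (gtheta h theta)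
  <= \sum_r theta r * (Amul h eta r - Amul h g r).
Proof.
move=> k0 etaP gmax; have [supp var] := maxent_variational gmax etaP.
have [[eta0 eta1] _] := etaP; have [[gS _] _] := gmax; have [_ g1] := gS.
rewrite dKL_gtheta // dKL_sumB //.
have := gibbs_ineq gS (gtheta_gt0 theta) (in_simplex_gtheta theta k0).2.
rewrite sum_mul_ln_gtheta //.
have -> : \sum_r theta r * (Amul h eta r - Amul h g r)
    = \sum_r theta r * Amul h eta r - \sum_r theta r * Amul h g r.
  by rewrite -sumrB; apply: eq_bigr => r _; ring.
move: var; under eq_bigr => i _ do under eq_bigr => l _ do rewrite mulrBl.
under eq_bigr => i _ do rewrite sumrB.
rewrite sumrB; lra.
Qed.

Lemma ln_partition_addZ_le theta v s i : (0 < k)%N ->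
  (forall l, `|s * atheta h v i l| <= 1/2) ->
  ln (partition (fun r => theta r + s * v r) i) - ln (partition theta i)
  <= \sum_l gtheta h theta i l * (s * atheta h v i l + 2 * (s * atheta h v i l) ^+ 2).
Proof.
move=> k0 small; have Z0 := partition_gt0 theta i k0.
have Zs0 := partition_gt0 (fun r => theta r + s * v r) i k0.
rewrite -ln_div ?posrE //; apply: le_trans (ln_le_subr1 (divr_gt0 Zs0 Z0)) _.
have -> : partition (fun r => theta r + s * v r) i / partition theta i
    = \sum_l gtheta h theta i l * expR (s * atheta h v i l).
  rewrite /partition mulr_suml; apply: eq_bigr => l _.
  by rewrite atheta_addZ expRD /gtheta /partition; ring.
rewrite -{1}((in_simplex_gtheta theta k0).2 i) -sumrB; apply: ler_sum => l _.
by have := gtheta_gt0 theta i l; have := expR_le_quad (small l); nra.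
Qed.

Section argmin.
Variables (e : vec R n k) (thetas : 'I_(p + k) -> R).
Hypotheses (k0 : (0 < k)%N) (eS : in_simplex e).
Hypothesis thetas_min :
  forall theta, dKL e (gtheta h thetas) <= dKL e (gtheta h theta).

Lemma dKL_argmin_moment_le v :
  \sum_r v r * (Amul h e r - Amul h (gtheta h thetas) r) <= 0.
Proof.
set G := gtheta h thetas; set w := atheta h v.
set W := \sum_i \sum_l G i l * w i l ^+ 2.
set B := \sum_i \sum_l `|w i l| + 1.
have W0 : 0 <= W.
  apply: sumr_ge0 => i _; apply: sumr_ge0 => l _.
  by rewrite mulr_ge0 ?sqr_ge0 // ltW ?gtheta_gt0.
have wB i l : `|w i l| <= B - 1.
  rewrite addrK.
  apply: le_trans (sumr_ge_entry l (fun l => normr_ge0 (w i l))) _.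
  by apply: (sumr_ge_entry (F := fun i => \sum_l `|w i l|)) => j; apply: sumr_ge0.
have B1 : 1 <= B by rewrite lerDr; apply: sumr_ge0 => i _; apply: sumr_ge0.
apply: (@le0_of_le_small _ _ (2 * W) (1 / (2 * B))) => [|s s0 sB].
  by apply: divr_gt0; lra.
have small i l : `|s * w i l| <= 1/2.
  rewrite normrM gtr0_norm //; move: sB; rewrite ler_pdivlMr; last lra.
  by have := wB i l; have := normr_ge0 (w i l); nra.
have := thetas_min (fun r => thetas r + s * v r); rewrite !dKL_gtheta //.
have lin : \sum_r (thetas r + s * v r) * Amul h e r
    = \sum_r thetas r * Amul h e r + s * \sum_r v r * Amul h e r.
  by rewrite mulr_sumr -big_split; apply: eq_bigr => r _ /=; ring.
have part : \sum_i ln (partition (fun r => thetas r + s * v r) i)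
    - \sum_i ln (partition thetas i)
    <= s * \sum_r v r * Amul h G r + 2 * s ^+ 2 * W.
  rewrite -sumrB; apply: le_trans (ler_sum _ (fun i _ =>
    ln_partition_addZ_le thetas k0 (small i))) _.
  rewrite -sum_mul_atheta !mulr_sumr -big_split /=; apply: ler_sum => i _.
  rewrite !mulr_sumr -big_split /=; apply: ler_sum => l _.
  by rewrite le_eqVlt; apply/orP; left; apply/eqP; rewrite /G /w; ring.
have -> : \sum_r v r * (Amul h e r - Amul h G r)
    = \sum_r v r * Amul h e r - \sum_r v r * Amul h G r.
  by rewrite -sumrB; apply: eq_bigr => r _; ring.
rewrite lin => opt; rewrite -(ler_pM2l s0); nra.
Qed.

Lemma dKL_argmin_moment r : Amul h e r = Amul h (gtheta h thetas) r.
Proof.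
pose d r := Amul h e r - Amul h (gtheta h thetas) r.
apply/eqP; rewrite -subr_eq0 -sqrf_eq0 eq_le sqr_ge0 andbT -/(d r).
apply: le_trans (dKL_argmin_moment_le d); rewrite expr2.
by apply: (sumr_ge_entry (F := fun r => d r * d r)) => j; rewrite -expr2 sqr_ge0.
Qed.

End argmin.

Lemma dKL_gtheta_pythagoras eta thetas theta : (0 < k)%N -> in_simplex eta ->
  (forall r, Amul h eta r = Amul h (gtheta h thetas) r) ->
  dKL eta (gtheta h theta) - dKL eta (gtheta h thetas)
  = dKL (gtheta h thetas) (gtheta h theta).
Proof.
move=> k0 etaS moments; have GS := in_simplex_gtheta thetas k0.
have sumE th : \sum_r th r * Amul h eta r = \sum_r th r * Amul h (gtheta h thetas) r.
  by apply: eq_bigr => r _; rewrite moments.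
rewrite !dKL_gtheta // sum_mul_ln_gtheta; last exact: GS.2.
by rewrite !sumE; ring.
Qed.

End exponential_family.

Theorem theorem4 (R : realType) (n k p : nat)
  (h : 'I_p -> 'I_n -> option 'I_k)
  (eta : 'I_n -> 'I_k -> R) (b eps : 'I_(p + k) -> R)
  (thetastar : 'I_(p + k) -> R) (gbf : 'I_n -> 'I_k -> R) :
  (1 <= n)%N -> (2 <= k)%N -> (1 <= p)%N ->
  (forall j : 'I_p, (1 <= nrule h j)%N) ->
  in_simplex eta ->
  (forall r, 0 <= eps r) ->
  (forall r, b r - eps r <= Amul h eta r <= b r + eps r) ->
  (forall theta, dKL eta (gtheta h thetastar) <= dKL eta (gtheta h theta)) ->
  is_maxent h b eps gbf ->
  let bound := 2 * \sum_(r < p + k) eps r * `|thetastar r| in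
  (dKL eta gbf - dKL eta (gtheta h thetastar) <= bound /\
   bound <= 2 * (\big[Num.max/0]_(r < p + k) eps r)
               * \sum_(r < p + k) `|thetastar r|) /\
  ((exists theta, forall i l, gbf i l = gtheta h theta i l) ->
     dKL eta gbf - dKL eta (gtheta h thetastar) = dKL (gtheta h thetastar) gbf
     /\ dKL (gtheta h thetastar) gbf <= bound).
Proof.
move=> _ k2 _ _ etaS _ etaA thetastar_min gmax bound.
have k0 : (0 < k)%N by apply: leq_trans k2.
have gap_le : dKL eta gbf - dKL eta (gtheta h thetastar) <= bound.
  apply: le_trans (dKL_sub_le_maxent thetastar k0 (conj etaS etaA) gmax) _.
  exact: sum_mul_box_le etaA gmax.1.2.
split.
  split=> //; rewrite /bound -mulrA ler_pM2l ?ltr0n //.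
  exact: sum_mul_norm_le_bigmax.
case=> theta gbfE.
have gbf_eq : gbf = gtheta h theta by apply/funext=> i; apply/funext=> l.
subst gbf; have moments := dKL_argmin_moment k0 etaS thetastar_min.
by rewrite -(dKL_gtheta_pythagoras theta k0 etaS moments).
Qed.
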